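(* Let $w\in\mathfrak{S}_n$ be Bruhat irreducible and almost reducible at $(J,i)$. Then $s_i$ commutes with every element of $D_L(w)\cap D_R(w)$.
   Context: $\mathfrak{S}_n$ has simple generators $S=\{s_1,\ldots,s_{n-1}\}$, $s_i=(i\ i{+}1)$, length $\ell$. $\supp(x)$ is the set of simple generators in a reduced word of $x$; $D_L(x)=\{s\in S:\ell(sx)<\ell(x)\}$, $D_R(x)=\{s\in S:\ell(xs)<\ell(x)\}$. For $J\subseteq S$, $x=x^Jx_J$ is the parabolic decomposition ($x_J\in W_J=\langle J\rangle$, $x^J$ minimal length in $xW_J$); it is a BP-decomposition if $\supp(x^J)\cap J\subseteq D_L(x_J)$. $w$ is Bruhat irreducible if $\supp(w)=S$ and $w$ is not a product $w'w''$ with $w',w''\ne e$ and $\supp(w')\cap\supp(w'')=\emptyset$. A Bruhat irreducible $w$ is almost reducible at $(J,i)$ if $w=w^Jw_J$ is a BP-decomposition with $\supp(w^J)\cap J=\{s_i\}$ and $s_i\notin D_L(w)\cup D_R(w)$. *)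

From Stdlib Require Import ClassicalEpsilon.
From HB Require Import structures.
From mathcomp Require Import all_boot all_fingroup.
Set Implicit Arguments. Unset Strict Implicit. Unset Printing Implicit Defensive.

Local Open Scope group_scope.

Section Coxeter.
Variable n : nat.

(* Simple generators s_1, ..., s_{n-1}: s_i = (i i+1); with 0-based points
   'I_n, s_i is the transposition of the points i-1 and i. *)
Definition Sgen : {set 'S_n} :=
  [set s | [exists i : 'I_n, exists j : 'I_n, (val j == (val i).+1) && (s == tperm i j)]].

Definition is_word (x : 'S_n) (w : seq 'S_n) : Prop :=
  all (fun s => s \in Sgen) w /\ \prod_(s <- w) s = x.

Definition is_length (x : 'S_n) (k : nat) : Prop :=
  (exists w, is_word x w /\ size w = k) /\ (forall w, is_word x w -> k <= size w).

Definition len (x : 'S_n) : nat := epsilon (inhabits 0%N) (is_length x).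

Definition reduced_word (x : 'S_n) (w : seq 'S_n) : Prop :=
  is_word x w /\ size w = len x.

Definition supp (x : 'S_n) (s : 'S_n) : Prop :=
  exists w, reduced_word x w /\ s \in w.

Definition DL (x : 'S_n) (s : 'S_n) : Prop := s \in Sgen /\ len (s * x) < len x.
Definition DR (x : 'S_n) (s : 'S_n) : Prop := s \in Sgen /\ len (x * s) < len x.

(* parabolic decomposition x = u v with u = x^J, v = x_J:
   v in W_J = <J>, u of minimal length in the coset x W_J *)
Definition parabolic_dec (J : {set 'S_n}) (x u v : 'S_n) : Prop :=
  [/\ x = u * v, v \in <<J>>, u \in x *: <<J>> &
      forall y, y \in x *: <<J>> -> len u <= len y].

Definition BP_dec (J : {set 'S_n}) (x u v : 'S_n) : Prop :=
  parabolic_dec J x u v /\ (forall s, supp u s -> s \in J -> DL v s).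

Definition bruhat_irreducible (w : 'S_n) : Prop :=
  (forall s, supp w s <-> s \in Sgen) /\
  ~ (exists w1 w2, [/\ w1 != 1, w2 != 1, w = w1 * w2 &
                       forall s, ~ (supp w1 s /\ supp w2 s)]).

(* w (Bruhat irreducible) is almost reducible at (J, s_i); here s plays s_i *)
Definition almost_reducible (w : 'S_n) (J : {set 'S_n}) (s : 'S_n) : Prop :=
  J \subset Sgen /\
  exists u v, [/\ BP_dec J w u v,
                  (forall t, (supp u t /\ t \in J) <-> t = s),
                  ~ DL w s & ~ DR w s].

End Coxeter.

(* Lengths in S_n are inversion numbers, and the simple generator tperm a b
   (with b = a + 1) lies in supp x exactly when x does not stabilise the
   initial segment cut b = {0, ..., b - 1}.  Let s = tperm a b and w = u v.
   Every cut other than b is stabilised by u (no J-generator but s occurs in u)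
   or by v (which lies in W_J).  On the other hand none of u, u s, v, s v
   stabilises cut b: for u s this is the minimality of u in u W_J, for v the
   descent s of v, and for s v the irreducibility of w, since otherwise
   w = (u s)(s v) with disjoint supports.  Now let t be a neighbour of s.  If u
   stabilises the cut of t, following the points next to the cut of s through
   w = u v shows that t is not a left descent of w; if v does, the same argument
   applied to w^-1 = v^-1 u^-1 shows that t is not a right descent. *)

From Stdlib Require Import ClassicalEpsilon.
From mathcomp Require Import all_boot all_fingroup zify.
Set Implicit Arguments. Unset Strict Implicit. Unset Printing Implicit Defensive.

Local Open Scope group_scope.

Section Length.
Variable n : nat.
Implicit Types (x y : 'S_n) (a b : 'I_n).

Definition inversions x : {set 'I_n * 'I_n} :=
  [set pq : 'I_n * 'I_n | (pq.1 < pq.2) && (x pq.2 < x pq.1)].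

Definition ninv x := #|inversions x|.

Lemma ninv1 : ninv 1 = 0.
Proof.
apply/eqP; rewrite cards_eq0; apply/eqP/setP => -[p q].
by rewrite !inE /= !perm1; case: ltngtP.
Qed.

Lemma ninvV x : ninv x^-1 = ninv x.
Proof.
suff ninvV_le y : ninv y^-1 <= ninv y.
  by apply/eqP; rewrite eqn_leq ninvV_le -{1}(invgK x) ninvV_le.
pose flip (pq : 'I_n * 'I_n) := (y pq.2, y pq.1).
apply: leq_trans (leq_imset_card flip _); apply/subset_leq_card/subsetP => -[c d].
rewrite inE /= => /andP[lt_cd inv_cd]; apply/imsetP; exists (y^-1 d, y^-1 c).
  by rewrite inE /= !permKV inv_cd lt_cd.
by rewrite /flip /= !permKV.
Qed.

Section AdjacentTransposition.
Variables a b : 'I_n.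
Hypothesis adj_ab : (b : nat) = a.+1.

Lemma tperm_ltn_adjacent p q :
  (p, q) != (a, b) -> (p, q) != (b, a) -> (tperm a b p < tperm a b q) = (p < q).
Proof.
rewrite !xpair_eqE.
by case: tpermP => [->|->|/eqP + /eqP +]; case: tpermP => [->|->|/eqP + /eqP +];
  rewrite -!val_eqE /=; lia.
Qed.

(* Precomposing with tperm a b swaps the adjacent positions a and b, so it
   permutes the inversions other than (a, b). *)
Lemma ninv_tpermM_asc x : x a < x b -> ninv (tperm a b * x) = (ninv x).+1.
Proof.
move=> asc; pose sw (pq : 'I_n * 'I_n) := (tperm a b pq.1, tperm a b pq.2).
have sw_inj : injective sw.
  by move=> [p q] [p' q'] [/perm_inj -> /perm_inj ->].
have ab_notin : (a, b) \notin sw @^-1: inversions x.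
  by rewrite !inE /= tpermL tpermR adj_ab ltnNge leqnSn.
rewrite /ninv; suff -> : inversions (tperm a b * x) = (a, b) |: sw @^-1: inversions x.
  by rewrite cardsU1 ab_notin card_preimset.
apply/setP => -[p q]; rewrite !inE /= !permM.
have [/eqP[-> ->]|ne_ab] := boolP ((p, q) == (a, b)).
  by rewrite tpermL tpermR adj_ab ltnSn asc.
have [/eqP[-> ->]|ne_ba] := boolP ((p, q) == (b, a)).
  by rewrite tpermL tpermR [(x b < _)]ltnNge (ltnW asc) !andbF.
by rewrite tperm_ltn_adjacent.
Qed.

Lemma ninv_tpermM_desc x : x b < x a -> ninv x = (ninv (tperm a b * x)).+1.
Proof.
move=> desc; have asc : (tperm a b * x)%g a < (tperm a b * x)%g b.
  by rewrite !permM tpermL tpermR.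
by rewrite -(ninv_tpermM_asc asc) mulgA tperm2 mul1g.
Qed.

Lemma ninv_tpermM_le x : ninv (tperm a b * x) <= (ninv x).+1.
Proof.
case: (ltngtP (x a) (x b)) => [asc|desc|/val_inj/perm_inj eq_ab].
- by rewrite ninv_tpermM_asc.
- by rewrite (ninv_tpermM_desc desc) ltnW.
- by move: adj_ab; rewrite eq_ab; lia.
Qed.

End AdjacentTransposition.

Lemma perm_ascents_eq1 x : (forall a b, (b : nat) = a.+1 -> x a < x b) -> x = 1.
Proof.
move=> asc; apply/permP => p; rewrite perm1.
have ltn_ord_trans : transitive (fun p q : 'I_n => p < q).
  by move=> ? ? ?; apply: ltn_trans.
have enum_sorted : sorted (fun p q : 'I_n => p < q) (enum 'I_n).
  by have := iota_ltn_sorted 0 n; rewrite -val_enum_ord sorted_map.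
have x_enum_sorted : sorted (fun p q : 'I_n => x p < x q) (enum 'I_n).
  apply/(sortedP p) => i; rewrite size_enum_ord => lt_i.
  by apply: asc; rewrite !nth_enum_ord // ltnW.
have x_enum : map x (enum 'I_n) = enum 'I_n.
  apply: (irr_sorted_eq ltn_ord_trans (fun p => ltnn p)) => //.
    by rewrite sorted_map.
  by move=> q; rewrite mem_enum; apply/mapP; exists (x^-1 q); rewrite ?mem_enum ?permKV.
have := congr1 (fun s => nth p s p) x_enum.
by rewrite /= (nth_map p) ?size_enum_ord // !nth_ord_enum.
Qed.

Lemma perm_eq1_or_descent x :
  x = 1 \/ exists a b, (b : nat) = a.+1 /\ x b < x a.
Proof.
have [/existsP[a /existsP[b /andP[/eqP adj desc]]]|no_desc] :=
  boolP [exists a : 'I_n, exists b : 'I_n, ((b : nat) == a.+1) && (x b < x a)].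
  by right; exists a, b.
left; apply: perm_ascents_eq1 => a b adj.
case: (ltngtP (x a) (x b)) => // [desc|/val_inj/perm_inj eq_ab].
  by case/existsP: no_desc; exists a; apply/existsP; exists b; rewrite adj eqxx.
by move: adj; rewrite eq_ab; lia.
Qed.

Lemma SgenP s :
  reflect (exists a b : 'I_n, (b : nat) = a.+1 /\ s = tperm a b) (s \in Sgen n).
Proof.
rewrite inE; apply: (iffP existsP) => [[a /existsP[b /andP[/eqP adj /eqP ->]]]|].
  by exists a, b.
by case=> a [b [adj ->]]; exists a; apply/existsP; exists b; rewrite -adj !eqxx.
Qed.

Lemma tperm_Sgen a b : (b : nat) = a.+1 -> tperm a b \in Sgen n.
Proof. by move=> adj; apply/SgenP; exists a, b. Qed.

Lemma word_ninv_le x ws : is_word x ws -> ninv x <= size ws.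
Proof.
elim: ws x => [|s ws IH] x [/= all_gen <-]; first by rewrite big_nil ninv1.
case/andP: all_gen => /SgenP[a [b [adj ->]]] all_gen.
rewrite big_cons; apply: leq_trans (ninv_tpermM_le adj _) _.
exact: IH (conj all_gen erefl).
Qed.

Lemma exists_word_ninv x : exists ws, is_word x ws /\ size ws = ninv x.
Proof.
have [k] := ubnP (ninv x); elim: k x => // k IH x lt_x.
case: (perm_eq1_or_descent x) => [->|[a [b [adj desc]]]].
  by exists [::]; rewrite /is_word big_nil ninv1.
have ninv_x := ninv_tpermM_desc adj desc.
have [|ws [[all_gen prod_ws] size_ws]] := IH (tperm a b * x); first by lia.
exists (tperm a b :: ws); split; last by rewrite /= size_ws ninv_x.
by split; rewrite /= ?tperm_Sgen // big_cons prod_ws mulgA tperm2 mul1g.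
Qed.

Lemma len_ninv x : len x = ninv x.
Proof.
have [ws [word_ws size_ws]] := exists_word_ninv x.
have len_x : is_length x (ninv x).
  by split=> [|vs /word_ninv_le //]; exists ws.
have : is_length x (len x) := epsilon_spec _ _ (ex_intro _ _ len_x).
case=> [[vs [word_vs <-]] min_len].
by apply/eqP; rewrite eqn_leq (word_ninv_le word_vs) -size_ws min_len.
Qed.

Lemma lenV x : len x^-1 = len x.
Proof. by rewrite !len_ninv ninvV. Qed.

Lemma DL_tpermP x a b : (b : nat) = a.+1 -> DL x (tperm a b) <-> x b < x a.
Proof.
move=> adj; rewrite /DL !len_ninv; split=> [[_]|desc].
  case: (ltngtP (x a) (x b)) => [asc|//|/val_inj/perm_inj eq_ab].
    by rewrite ninv_tpermM_asc // ltnNge leqnSn.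
  by move: adj; rewrite eq_ab; lia.
by split; [exact: tperm_Sgen | rewrite (ninv_tpermM_desc adj desc)].
Qed.

Lemma DR_tpermP x a b : (b : nat) = a.+1 -> DR x (tperm a b) <-> x^-1 b < x^-1 a.
Proof.
move=> adj; rewrite -DL_tpermP // /DR /DL -(lenV x).
by rewrite -[len (x * _)]lenV invMg tpermV.
Qed.

Lemma reduced_word_cons x r ws : is_word x (r :: ws) -> size (r :: ws) = len x ->
  [/\ DL x r, is_word (r * x) ws & size ws = len (r * x)].
Proof.
case=> /= /andP[/SgenP[a [b [adj ->]]] all_gen]; rewrite big_cons => prod_rws.
set y := \prod_(s <- ws) s in prod_rws *; rewrite !len_ninv => size_rws.
have yE : tperm a b * x = y by rewrite -prod_rws mulgA tperm2 mul1g.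
have ninv_y : ninv y <= size ws by apply: word_ninv_le.
have ninv_x : ninv x <= (ninv y).+1 by rewrite -prod_rws ninv_tpermM_le.
rewrite yE; split=> //; last by lia.
by split; rewrite ?tperm_Sgen // !len_ninv yE; lia.
Qed.

End Length.

Definition cut {n} m : {set 'I_n} := [set p : 'I_n | p < m].

Section Cuts.
Variable n : nat.
Implicit Types (x y : 'S_n) (a b : 'I_n).

Lemma cut_stabP x m : reflect (forall p, (x p < m) = (p < m)) (x \in 'N(cut m | 'P)).
Proof.
apply: (iffP astabsP) => fix_cut p; first by have := fix_cut p; rewrite !inE.
by rewrite !inE /= fix_cut.
Qed.

Lemma cut_stab_lt x a b : (b : nat) = a.+1 -> x \in 'N(cut b | 'P) -> x a < x b.
Proof. by move=> adj /cut_stabP fix_cut; have := fix_cut a; have := fix_cut b; lia. Qed.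

Lemma tperm_cut_stab a b m : (b : nat) = a.+1 -> (b : nat) <> m ->
  tperm a b \in 'N(cut m | 'P).
Proof. by move=> adj ne_bm; apply/cut_stabP => p; case: tpermP => [->|->|_ _]; lia. Qed.

Lemma cut_stab_succ x (m : 'I_n) :
  x m = m -> (x \in 'N(cut m.+1 | 'P)) = (x \in 'N(cut m | 'P)).
Proof.
move=> fix_m; apply/cut_stabP/cut_stabP => fix_cut p; have := fix_cut p;
  have [->|ne_pm] := eqVneq p m; rewrite ?fix_m //;
  move: ne_pm (ne_pm); rewrite -{1}(inj_eq (@perm_inj _ x)) fix_m -!val_eqE /=; lia.
Qed.

Lemma Sgen_cut_stab r a b : (b : nat) = a.+1 -> r \in Sgen n -> r != tperm a b ->
  r \in 'N(cut b | 'P).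
Proof.
move=> adj /SgenP[a' [b' [adj' ->]]] ne_r; apply: tperm_cut_stab (adj') _ => eq_b.
have eq_a : a' = a by apply: val_inj => /=; lia.
by move: ne_r; rewrite eq_a (val_inj eq_b) eqxx.
Qed.

Lemma reduced_word_tperm_notin x ws a b : (b : nat) = a.+1 ->
  x \in 'N(cut b | 'P) -> is_word x ws -> size ws = len x -> tperm a b \notin ws.
Proof.
move=> adj; elim: ws x => [//|r ws IH] x fix_cut word_rws size_rws.
have r_gen : r \in Sgen n by case: word_rws => /andP[].
have [DL_r word_ws size_ws] := reduced_word_cons word_rws size_rws.
have ne_r : r != tperm a b.
  apply/eqP => eq_r; move: DL_r; rewrite eq_r => /(DL_tpermP _ adj).
  by rewrite ltnNge ltnW // (cut_stab_lt adj fix_cut).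
rewrite in_cons negb_or eq_sym ne_r /=; apply: IH word_ws size_ws.
by rewrite groupM // (Sgen_cut_stab adj).
Qed.

Lemma suppP x a b : (b : nat) = a.+1 ->
  supp x (tperm a b) <-> x \notin 'N(cut b | 'P).
Proof.
move=> adj; split=> [[ws [[word_ws size_ws] s_in]]|not_fix].
  apply/negP => fix_cut; move: s_in.
  by rewrite (negbTE (reduced_word_tperm_notin adj fix_cut word_ws size_ws)).
have [ws [[all_gen prod_ws] size_ws]] := exists_word_ninv x.
exists ws; split; first by split; [split | rewrite len_ninv].
apply: contraNT not_fix => s_notin; rewrite -prod_ws big_seq group_prod // => r r_in.
by apply: Sgen_cut_stab adj (allP all_gen r r_in) _; apply: contraNneq s_notin => <-.
Qed.

Lemma supp_Sgen x s : supp x s -> s \in Sgen n.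
Proof. by case=> ws [[[all_gen _] _] s_in]; apply: (allP all_gen). Qed.

Section AdjacentCuts.
Variables a b : 'I_n.
Hypothesis adj_ab : (b : nat) = a.+1.

Lemma cut_below_left x : x \in 'N(cut b.+1 | 'P) -> x \notin 'N(cut b | 'P) ->
  x * tperm a b \notin 'N(cut b | 'P) -> x b < a.
Proof.
move=> fix_succ not_fix not_fix_s.
have : x b < b.+1 by move/cut_stabP: fix_succ => ->.
have ne_xb_b : x b != b.
  by apply: contraNneq not_fix => fix_b; rewrite -(cut_stab_succ fix_b).
have ne_xb_a : x b != a.
  apply: contraNneq not_fix_s => xb_a.
  have fix_b : (x * tperm a b) b = b by rewrite permM xb_a tpermL.
  by rewrite -(cut_stab_succ fix_b) groupM // tperm_cut_stab //; lia.
by move: ne_xb_b ne_xb_a; rewrite -!val_eqE /=; lia.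
Qed.

Lemma cut_above_right x : x \in 'N(cut a | 'P) -> x \notin 'N(cut b | 'P) ->
  x * tperm a b \notin 'N(cut b | 'P) -> b < x a.
Proof.
move=> fix_a not_fix not_fix_s.
have : a <= x a by move/cut_stabP/(_ a): fix_a; lia.
have ne_xa_a : x a != a.
  by apply: contraNneq not_fix => fix_a'; rewrite adj_ab (cut_stab_succ fix_a').
have ne_xa_b : x a != b.
  apply: contraNneq not_fix_s => xa_b.
  have fix_a' : (x * tperm a b) a = a by rewrite permM xa_b tpermR.
  by rewrite adj_ab (cut_stab_succ fix_a') groupM // tperm_cut_stab //; lia.
by move: ne_xa_a ne_xa_b; rewrite -!val_eqE /=; lia.
Qed.

Lemma no_descent_beside x y (c d : 'I_n) :
  (d : nat) = c.+1 -> (c : nat) = b \/ (d : nat) = a ->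
  (forall m : nat, m <> b -> x \in 'N(cut m | 'P) \/ y \in 'N(cut m | 'P)) ->
  x \in 'N(cut d | 'P) -> x \notin 'N(cut b | 'P) ->
  x * tperm a b \notin 'N(cut b | 'P) -> (x * y)%g c < (x * y)%g d.
Proof.
move=> adj_cd [/val_inj c_b|/val_inj d_a] split_cuts fix_d not_fix not_fix_s;
  rewrite !permM; subst.
- have fix_succ : x \in 'N(cut b.+1 | 'P) by rewrite -adj_cd.
  have xb_lt := cut_below_left fix_succ not_fix not_fix_s.
  move/cut_stabP/(_ d): fix_d => xd_ge.
  case: (split_cuts a) => [|/cut_stabP fix_a|/cut_stabP fix_a]; first lia.
    by have := fix_a b; lia.
  by have := fix_a (x b); have := fix_a (x d); lia.
- have xa_gt := cut_above_right fix_d not_fix not_fix_s.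
  move/cut_stabP/(_ c): fix_d => xc_lt.
  case: (split_cuts b.+1) => [|/cut_stabP fix_succ|/cut_stabP fix_succ]; first lia.
    by have := fix_succ a; lia.
  by have := fix_succ (x a); have := fix_succ (x c); lia.
Qed.

End AdjacentCuts.

End Cuts.

Lemma tperm_adjacent_commute n (a b c d : 'I_n) :
  (b : nat) = a.+1 -> (d : nat) = c.+1 -> (c : nat) <> b -> (d : nat) <> a ->
  tperm a b * tperm c d = tperm c d * tperm a b.
Proof.
move=> adj_ab adj_cd ne_cb ne_da.
have [c_a|ne_ca] := eqVneq (c : nat) a.
  have -> : c = a := val_inj c_a.
  by have -> : d = b by apply: val_inj => /=; lia.
have tperm_fix : tperm a b ^ tperm c d = tperm a b.
  by rewrite tpermJ !tpermD // -val_eqE /=; apply/eqP; lia.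
by rewrite conjgC tperm_fix.
Qed.

Section AlmostReducible.
Variables (n : nat) (J : {set 'S_n}) (w u v : 'S_n) (a b : 'I_n).
Local Notation s := (tperm a b).
Hypotheses (adj_ab : (b : nat) = a.+1) (J_gen : J \subset Sgen n) (sJ : s \in J).
Hypothesis w_dec : parabolic_dec J w u v.
Hypothesis u_supp_J : forall t, supp u t /\ t \in J <-> t = s.
Hypothesis v_desc : DL v s.
Hypothesis w_not_DR : ~ DR w s.
Hypothesis w_irr : bruhat_irreducible w.

Lemma u_not_cut : u \notin 'N(cut b | 'P).
Proof. by apply/(suppP _ adj_ab); case: (u_supp_J s) => _ /(_ erefl) []. Qed.

Lemma u_inv_ascent : u^-1 a < u^-1 b.
Proof.
case: w_dec => w_eq _ u_coset u_min.
have u_s_coset : u * s \in w *: <<J>>.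
  by move: u_coset; rewrite !mem_lcoset => ?; rewrite mulgA groupM // mem_gen.
case: (ltngtP (u^-1 a) (u^-1 b)) => [//|desc|/val_inj/perm_inj eq_ab].
  by have [_] := (DR_tpermP u adj_ab).2 desc; rewrite ltnNge u_min.
by move: adj_ab; rewrite eq_ab; lia.
Qed.

Lemma u_tperm_not_cut : u * s \notin 'N(cut b | 'P).
Proof.
apply/negP; rewrite -groupV invMg tpermV => /(cut_stab_lt adj_ab).
by rewrite !permM tpermL tpermR ltnNge ltnW // u_inv_ascent.
Qed.

Lemma v_not_cut : v \notin 'N(cut b | 'P).
Proof.
apply/negP => /(cut_stab_lt adj_ab); move/(DL_tpermP _ adj_ab): v_desc.
by move=> desc; rewrite ltnNge ltnW.
Qed.

Lemma cut_stab_u_or_v (m : nat) :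
  m <> b -> u \in 'N(cut m | 'P) \/ v \in 'N(cut m | 'P).
Proof.
move=> ne_mb; have [u_fix|u_not_fix] := boolP (u \in 'N(cut m | 'P)); [by left | right].
case: w_dec => _ v_gen _ _; apply: subsetP v v_gen; rewrite gen_subG.
apply/subsetP => r rJ; have /SgenP[a' [b' [adj' def_r]]] := subsetP J_gen r rJ.
have [eq_m|ne_m] := eqVneq (b' : nat) m.
  have -> : r = s by apply/u_supp_J; rewrite def_r (suppP _ adj') eq_m -def_r.
  by apply: tperm_cut_stab adj_ab _; apply: nesym.
by rewrite def_r; apply: tperm_cut_stab adj' _; apply/eqP.
Qed.

Lemma tperm_v_not_cut : s * v \notin 'N(cut b | 'P).
Proof.
case: w_dec => w_eq _ _ _; apply/negP => sv_fix; apply: w_irr.2.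
exists (u * s), (s * v); split.
- by apply: contraNneq u_tperm_not_cut => ->; apply: group1.
- apply/eqP => sv1; apply: w_not_DR; apply/(DR_tpermP _ adj_ab).
  have -> : w = u * s by rewrite w_eq -[v]mul1g -(tperm2 a b) -mulgA sv1 mulg1.
  by rewrite invMg tpermV !permM tpermL tpermR u_inv_ascent.
- by rewrite w_eq mulgA -(mulgA u) tperm2 mulg1.
move=> r [supp_us supp_sv]; have /SgenP[a' [b' [adj' def_r]]] := supp_Sgen supp_us.
move: supp_us supp_sv; rewrite def_r !(suppP _ adj') => us_not_fix sv_not_fix.
have [eq_b|ne_b] := eqVneq (b' : nat) b; first by move: sv_not_fix; rewrite eq_b sv_fix.
have s_fix : s \in 'N(cut b' | 'P).
  by apply: tperm_cut_stab adj_ab _; apply/eqP; rewrite eq_sym.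
case: (cut_stab_u_or_v (m := b') (elimN eqP ne_b)) => [u_fix|v_fix].
  by move: us_not_fix; rewrite groupM.
by move: sv_not_fix; rewrite groupM.
Qed.

Lemma not_double_descent_beside (c d : 'I_n) :
  (d : nat) = c.+1 -> (c : nat) = b \/ (d : nat) = a ->
  DL w (tperm c d) -> DR w (tperm c d) -> False.
Proof.
case: w_dec => w_eq _ _ _ adj_cd near.
move=> /(DL_tpermP _ adj_cd) DL_t /(DR_tpermP _ adj_cd) DR_t.
have ne_db : (d : nat) <> b by case: near; lia.
have [u_fix|v_fix] := cut_stab_u_or_v ne_db.
  have := no_descent_beside adj_ab adj_cd near cut_stab_u_or_v u_fix u_not_cut.
  by rewrite -w_eq u_tperm_not_cut; move/(_ isT); lia.
have split_cuts_inv (m : nat) :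
  m <> b -> v^-1 \in 'N(cut m | 'P) \/ u^-1 \in 'N(cut m | 'P).
  by move=> ne_mb; rewrite !groupV; case: (cut_stab_u_or_v ne_mb); [right | left].
have sv_inv : v^-1 * s = (s * v)^-1 by rewrite invMg tpermV.
have := no_descent_beside adj_ab adj_cd near split_cuts_inv.
rewrite !groupV v_fix v_not_cut sv_inv groupV tperm_v_not_cut -invMg -w_eq.
by move/(_ isT isT isT)/ltn_trans/(_ DR_t); rewrite ltnn.
Qed.

End AlmostReducible.

Theorem corollary5p5 (n : nat) (w : 'S_n) (J : {set 'S_n}) (s : 'S_n) :
  bruhat_irreducible w -> almost_reducible w J s ->
  forall t : 'S_n, DL w t -> DR w t -> (s * t = t * s)%g.
Proof.
move=> w_irr [J_gen [u [v [[w_dec BP] u_supp_J _ w_not_DR]]]] t DL_t DR_t.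
have [u_supp_s sJ] := (u_supp_J s).2 erefl.
have /SgenP[a [b [adj_ab def_s]]] := subsetP J_gen s sJ.
have /SgenP[c [d [adj_cd def_t]]] := DL_t.1.
subst s t; have v_desc := BP _ u_supp_s sJ.
have [near|[ne_cb ne_da]] :
    ((c : nat) = b \/ (d : nat) = a) \/ ((c : nat) <> b /\ (d : nat) <> a) by lia.
  by case: (not_double_descent_beside adj_ab J_gen sJ w_dec u_supp_J v_desc
              w_not_DR w_irr adj_cd near DL_t DR_t).
exact: tperm_adjacent_commute.
Qed.
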